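(* Let $n\ge 1$ and $0\le k\le n$, and let $L_n$ denote the number of Latin squares of order $n$. The number of preference profiles for $n$ men and $n$ women in which both the men's preferences and the women's preferences form Latin squares and there are exactly $k$ pairs of soulmates is \[\frac{L_n^2}{n!} \binom{n}{k} \sum_{i=0}^{n-k} (-1)^i \frac{(n-k)!}{i!}.\]
   Context: A preference profile for $n$ (labeled) men and $n$ (labeled) women consists of, for each man, a strict ranking of the women (bijection to $\{1,\dots,n\}$, 1 = favorite), and for each woman, a strict ranking of the men. The men's preferences form a Latin square if the $n\times n$ matrix whose $i$-th row lists the women in man $i$'s order of preference is a Latin square, i.e. for each rank $r$ the women ranked $r$-th by the different men are distinct; similarly for the women's preferences. A man and a woman are soulmates if each ranks the other first. *)

From mathcomp Require Import all_boot all_order all_algebra all_fingroup.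
Set Implicit Arguments. Unset Strict Implicit. Unset Printing Implicit Defensive.

(* Ranks are 0-indexed: rank 0 (in 'I_n) = rank 1 of the paper = favorite. *)

Definition latin_square n (M : 'M['I_n]_n) : bool :=
  [forall i, forall j1, forall j2, (M i j1 == M i j2) ==> (j1 == j2)] &&
  [forall j, forall i1, forall i2, (M i1 j == M i2 j) ==> (i1 == i2)].

Definition latin_count n : nat := #|[set M : 'M['I_n]_n | latin_square M]|.

(* A side's preferences: for each person p, a bijection
   (ranking) from the other side to ranks; (P p) x = rank of x for p. *)
Definition prefs n := {ffun 'I_n -> {perm 'I_n}}.

(* The matrix whose i-th row lists the other side in person i's order:
   entry (i, r) = the person ranked r by i. *)
Definition pref_matrix n (P : prefs n) : 'M['I_n]_n :=
  \matrix_(i, r) ((P i)^-1)%g r.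

Definition latin_prefs n (P : prefs n) : bool := latin_square (pref_matrix P).

Definition soulmates n (Men Women : prefs n) (m w : 'I_n) : bool :=
  (nat_of_ord (Men m w) == 0%N) && (nat_of_ord (Women w m) == 0%N).

Definition num_soulmate_pairs n (Men Women : prefs n) : nat :=
  #|[set mw : 'I_n * 'I_n | soulmates Men Women mw.1 mw.2]|.

Definition num_latin_profiles n k : nat :=
  #|[set MW : prefs n * prefs n |
      [&& latin_prefs MW.1, latin_prefs MW.2 &
          num_soulmate_pairs MW.1 MW.2 == k]]|.

From mathcomp Require Import all_boot all_order all_algebra all_fingroup.
From mathcomp Require Import ring.
Import GRing.Theory Num.Theory.
Set Implicit Arguments. Unset Strict Implicit. Unset Printing Implicit Defensive.

(* For a Latin preference side P, the rank-0 column m |-> (P m)^-1 0 is a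
   permutation, and permuting the rows of P shows that every permutation is
   the first-choice column of the same number c = L_n / n! of Latin sides.
   Soulmate pairs of (P, Q) are the fixed points of the composite of their
   first-choice permutations, so the count is c^2 n! F_k, where F_k is the
   number of permutations with exactly k fixed points; inclusion-exclusion
   over sets of fixed points gives F_k = C(n,k) sum_i (-1)^i (n-k)!/i!. *)

Definition fixed_points (T : finType) (r : {perm T}) : {set T} :=
  [set x | r x == x].

Lemma bin_mul_bin k m j :
  ('C(k + m, k + j) * 'C(k + j, k) = 'C(k + m, k) * 'C(m, j))%N.
Proof.
have [ltmj | lejm] := ltnP m j.
  by rewrite (bin_small ltmj) bin_small ?muln0 ?ltn_add2l.
have eA := bin_fact (_ : k + j <= k + m)%N; rewrite subnDl in eA.
have eB := bin_fact (leq_addr j k); rewrite addKn in eB.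
have eC := bin_fact (leq_addr m k); rewrite addKn in eC.
have eD := bin_fact lejm.
apply/eqP; rewrite -(eqn_pmul2r (_ : 0 < k`! * j`! * (m - j)`!)%N); last first.
  by rewrite !muln_gt0 !fact_gt0.
apply/eqP.
transitivity ('C(k + m, k + j) * ('C(k + j, k) * (k`! * j`!) * (m - j)`!))%N.
  by ring.
rewrite eB eA ?leq_add2l //.
transitivity ('C(k + m, k) * (k`! * ('C(m, j) * (j`! * (m - j)`!))))%N.
  by rewrite eD eC.
by ring.
Qed.

Lemma card_perm_fixing (T : finType) (U : {set T}) :
  #|[set r : {perm T} | U \subset fixed_points r]| = (#|T| - #|U|)`!.
Proof.
rewrite -(cardsC U) addKn -card_perm; apply: eq_card => r.
rewrite inE unfold_in -setCS; apply: eq_subset => x.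
by rewrite !inE.
Qed.

Section FixedPointCount.

Local Open Scope ring_scope.

Lemma sum_bin_mul_bin (R : pzSemiRingType) n k (F : nat -> R) :
  \sum_(u < n.+1) 'C(n, u)%:R * 'C(u, k)%:R * F u =
  'C(n, k)%:R * \sum_(j < (n - k).+1) 'C(n - k, j)%:R * F (k + j).
Proof.
have [ltnk | lekn] := ltnP n k.
  rewrite bin_small // mul0r big1 // => u _.
  by rewrite (@bin_small u) ?mulr0 ?mul0r // (leq_trans (ltn_ord u)).
rewrite -(big_mkord xpredT (fun u => 'C(n, u)%:R * 'C(u, k)%:R * F u)).
rewrite -(subnKC lekn) addKn; set m := (n - k)%N.
rewrite (@big_cat_nat _ _ _ k) ?leqW ?leq_addr //=.
rewrite big_nat_cond big1 ?add0r => [|u /andP[/andP[_ ltuk] _]]; last first.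
  by rewrite (bin_small ltuk) mulr0 mul0r.
rewrite -{1}[k]add0n big_addn -addnS addKn big_mkord mulr_sumr.
by apply: eq_bigr => j _; rewrite !(addnC j) -natrM bin_mul_bin natrM mulrA.
Qed.

Lemma sum_bin_mul_bin_sign (R : pzRingType) f k :
  \sum_(u < f.+1) 'C(f, u)%:R * 'C(u, k)%:R * (-1) ^+ (u - k) = (f == k)%:R :> R.
Proof.
rewrite (sum_bin_mul_bin _ _ (fun u => (-1) ^+ (u - k))).
under eq_bigr do rewrite addKn mulr_natl.
rewrite -exprD1n addNr expr0n subn_eq0.
have [ltfk | lekf] := ltnP f k; first by rewrite bin_small // mul0r ltn_eqF.
rewrite eqn_leq lekf andbT; case: leqP => [lefk | _]; last by rewrite mulr0.
have -> : f = k by apply/eqP; rewrite eqn_leq lefk.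
by rewrite binn mulr1.
Qed.

Lemma sum_subsets_card (R : pzSemiRingType) (T : finType) (A : {set T})
    (g : nat -> R) :
  \sum_(U : {set T} | U \subset A) g #|U| =
  \sum_(u < #|A|.+1) 'C(#|A|, u)%:R * g u.
Proof.
rewrite (partition_big (fun U : {set T} => inord #|U| : 'I_#|A|.+1) xpredT) //=.
apply: eq_bigr => u _; rewrite mulr_natl -cards_draws -sumr_const.
apply: eq_big => [U | U /andP[sUA /eqP <-]]; last first.
  by rewrite inordK // ltnS subset_leq_card.
rewrite inE; case sUA: (U \subset A) => //=.
by rewrite -val_eqE /= inordK // ltnS subset_leq_card.
Qed.

Lemma card_perm_fixed_points_incl_excl (R : pzRingType) (T : finType) k :
  #|[set r : {perm T} | #|fixed_points r| == k]|%:R =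
  \sum_(u < #|T|.+1)
     'C(#|T|, u)%:R * 'C(u, k)%:R * (-1) ^+ (u - k) * ((#|T| - u)`!)%:R :> R.
Proof.
pose h u : R := 'C(u, k)%:R * (-1) ^+ (u - k).
transitivity (\sum_(r : {perm T}) \sum_(U : {set T} | U \subset fixed_points r)
                 h #|U|).
  rewrite -sumr_const big_mkcond; apply: eq_bigr => r _.
  rewrite sum_subsets_card inE; under eq_bigr do rewrite mulrA.
  by rewrite sum_bin_mul_bin_sign; case: eqP.
rewrite (exchange_big_dep xpredT) //=.
transitivity (\sum_(U : {set T} | U \subset setT) h #|U| * ((#|T| - #|U|)`!)%:R).
  apply: eq_big => [U | U _]; first by rewrite subsetT.
  rewrite (eq_bigl (fun r => r \in [set r | U \subset fixed_points r])) => [|r].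
    by rewrite sumr_const card_perm_fixing mulr_natr.
  by rewrite inE.
rewrite (sum_subsets_card _ (fun u => h u * ((#|T| - u)`!)%:R)) cardsT.
by apply: eq_bigr => u _; rewrite !mulrA.
Qed.

Lemma card_perm_fixed_points (R : numFieldType) (T : finType) k :
  #|[set r : {perm T} | #|fixed_points r| == k]|%:R =
  'C(#|T|, k)%:R *
    \sum_(i < (#|T| - k).+1) (-1) ^+ i * ((#|T| - k)`!)%:R / (i`!)%:R :> R.
Proof.
rewrite card_perm_fixed_points_incl_excl; under eq_bigr do rewrite -mulrA.
rewrite (sum_bin_mul_bin _ _ (fun u => (-1) ^+ (u - k) * ((#|T| - u)`!)%:R)).
congr (_ * _); apply: eq_bigr => [[j /= ltjm]] _; rewrite addKn subnDA.
rewrite -(bin_fact (_ : j <= #|T| - k)%N) // !natrM.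
by field; rewrite pnatr_eq0 -lt0n fact_gt0.
Qed.

End FixedPointCount.

Lemma card_mul_pairs (gT : finGroupType) (A : {set gT}) :
  #|[set st : gT * gT | (st.1 * st.2)%g \in A]| = #|gT| * #|A|.
Proof.
pose f (st : gT * gT) := (st.1, (st.1 * st.2)%g).
have f_inj : injective f by move=> [s t] [s' t'] [<-] /mulgI ->.
have -> : [set st | (st.1 * st.2)%g \in A] = f @^-1: setX setT A.
  by apply/setP => st; rewrite !inE.
by rewrite card_preimset // cardsX cardsT.
Qed.

Section LatinPreferences.

Variable n : nat.
Implicit Types (P Q : prefs n) (r : 'I_n) (s t : {perm 'I_n}).

(* Junk value 1 unless the rank-r column is injective, as it is for Latin P. *)
Definition column P r : {perm 'I_n} :=
  insubd (1%g : {perm 'I_n}) [ffun m => ((P m)^-1)%g r].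

Lemma latin_prefsP P :
  reflect (forall r, injective (fun m => ((P m)^-1)%g r)) (latin_prefs P).
Proof.
apply: (iffP andP) => [[_ /forallP latP] r m1 m2 eq_r | injP].
  have /forallP/(_ m1)/forallP/(_ m2) := latP r.
  by rewrite !mxE eq_r eqxx => /eqP.
split; apply/forallP => i; apply/'forall_forallP => j1 j2; apply/implyP;
  rewrite !mxE => /eqP eq_ij; apply/eqP; [exact: perm_inj eq_ij | exact: injP eq_ij].
Qed.

Lemma columnE P r m : latin_prefs P -> column P r m = ((P m)^-1)%g r.
Proof.
move=> /latin_prefsP/(_ r) injPr.
by rewrite -pvalE /column insubdK ?ffunE //; exact: perm_proof.
Qed.

Lemma pref_matrix_inj : injective (@pref_matrix n).
Proof.
move=> P Q eqPQ; apply/ffunP => i; apply: invg_inj; apply/permP => r.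
by move/matrixP/(_ i r): eqPQ; rewrite !mxE.
Qed.

Lemma latin_square_row_inj (M : 'M['I_n]_n) :
  latin_square M -> forall i, injective (M i).
Proof.
case/andP=> latM _ i r1 r2 eqM; have /forallP/(_ i) latMi := latM.
by have /forallP/(_ r1)/forallP/(_ r2) := latMi; rewrite eqM eqxx => /eqP.
Qed.

Lemma card_latin_prefs : #|[set P : prefs n | latin_prefs P]| = latin_count n.
Proof.
rewrite /latin_count -(card_imset _ pref_matrix_inj); apply: eq_card => M.
rewrite inE; apply/imsetP/idP => [[P] | latM].
  by rewrite inE => latP ->.
have rowM := latin_square_row_inj latM.
pose P : prefs n := [ffun i => ((perm (rowM i))^-1)%g].
have PM : pref_matrix P = M.
  by apply/matrixP => i r; rewrite mxE ffunE invgK permE.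
by exists P; rewrite // inE /latin_prefs PM.
Qed.

Definition row_shift (p : {perm 'I_n}) P : prefs n := [ffun m => P (p m)].

Lemma latin_row_shift p P : latin_prefs P -> latin_prefs (row_shift p P).
Proof.
move=> /latin_prefsP injP; apply/latin_prefsP => r m1 m2.
by rewrite !ffunE => /(injP r)/perm_inj.
Qed.

Lemma column_row_shift p P r :
  latin_prefs P -> column (row_shift p P) r = (p * column P r)%g.
Proof.
move=> latP; apply/permP => m.
by rewrite permM !columnE ?latin_row_shift // ffunE.
Qed.

Definition latin_fiber r s := [set P | latin_prefs P & column P r == s].

Lemma card_latin_fiber_le r s t : #|latin_fiber r s| <= #|latin_fiber r t|.
Proof.
pose p := (t * s^-1)%g.
have shift_inj : injective (row_shift p).
  move=> P Q /ffunP eqPQ; apply/ffunP => m.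
  by have := eqPQ ((p^-1)%g m); rewrite !ffunE permKV.
rewrite -(card_imset _ shift_inj); apply/subset_leq_card/subsetP => _ /imsetP[P + ->].
rewrite !inE => /andP[latP /eqP colP].
by rewrite latin_row_shift // column_row_shift // colP /p mulgVK eqxx.
Qed.

Lemma card_latin_fiber r s : #|latin_fiber r s| = #|latin_fiber r 1|.
Proof. by apply/anti_leq; rewrite !card_latin_fiber_le. Qed.

Lemma card_latin_prefs_fiber r :
  #|[set P : prefs n | latin_prefs P]| = n`! * #|latin_fiber r 1|.
Proof.
rewrite -sum1_card (partition_big (column^~ r) xpredT) //=.
rewrite (eq_bigr (fun _ => #|latin_fiber r 1|)) => [|s _].
  by rewrite sum_nat_const card_Sn.
by rewrite -(card_latin_fiber r s) -sum1_card; apply: eq_bigl => P; rewrite !inE.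
Qed.

End LatinPreferences.

Section FirstChoices.

Variable n : nat.
Implicit Types (P Q : prefs n.+1).

Lemma rank0_perm (p : {perm 'I_n.+1}) w :
  (nat_of_ord (p w) == 0%N) = ((p^-1)%g ord0 == w).
Proof. by rewrite (canF_eq (permKV p)) eq_sym. Qed.

Lemma num_soulmate_pairs_column P Q : latin_prefs P -> latin_prefs Q ->
  num_soulmate_pairs P Q =
    #|fixed_points (column P ord0 * column Q ord0)%g|.
Proof.
move=> latP latQ; rewrite /num_soulmate_pairs.
pose s := column P ord0; pose t := column Q ord0.
have -> : [set mw | soulmates P Q mw.1 mw.2] =
          (fun m => (m, s m)) @: fixed_points (s * t)%g.
  apply/setP => [[m w]]; rewrite inE /soulmates /= !rank0_perm -!columnE //.
  apply/andP/imsetP => [[/eqP <- /eqP fix_m] | [x + [-> ->]]].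
    by exists m; rewrite // inE permM fix_m.
  by rewrite inE permM => /eqP ->; rewrite !eqxx.
by apply: card_imset => x y [].
Qed.

Lemma num_latin_profiles_fiber k :
  num_latin_profiles n.+1 k =
  n.+1`! * #|[set r : {perm 'I_n.+1} | #|fixed_points r| == k]| *
    #|latin_fiber (ord0 : 'I_n.+1) 1| ^ 2.
Proof.
pose F := [set st : {perm 'I_n.+1} * {perm 'I_n.+1} |
             #|fixed_points (st.1 * st.2)%g| == k].
pose col (PQ : prefs n.+1 * prefs n.+1) := (column PQ.1 ord0, column PQ.2 ord0).
rewrite /num_latin_profiles -sum1_card (partition_big col (mem F)) /=; last first.
  move=> [P Q]; rewrite !inE /= => /and3P[latP latQ].
  by rewrite num_soulmate_pairs_column.
rewrite (eq_bigr (fun _ => #|latin_fiber (ord0 : 'I_n.+1) 1| ^ 2)) => [|[s t] st_F].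
  rewrite sum_nat_const -card_Sn -card_mul_pairs; congr (_ * _).
  by apply: eq_card => st; rewrite !inE.
rewrite inE /= in st_F.
rewrite expnS expn1 -{1}(card_latin_fiber ord0 s) -(card_latin_fiber ord0 t).
rewrite -cardsX -sum1_card; apply: eq_bigl => [[P Q]]; rewrite !inE xpair_eqE /=.
apply/andP/andP => [[/and3P[-> -> _] /andP[-> ->]] //|].
move=> [/andP[latP /eqP colP] /andP[latQ /eqP colQ]].
by rewrite latP latQ num_soulmate_pairs_column // colP colQ st_F !eqxx.
Qed.

End FirstChoices.

Local Open Scope ring_scope.

Theorem mainTheorem5 (n k : nat) (hn : (1 <= n)%N) (hk : (k <= n)%N) :
  (num_latin_profiles n k)%:R =
    ((latin_count n)%:R ^+ 2 / (n`!)%:R) * ('C(n, k))%:R *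
    \sum_(i < (n - k).+1) (-1) ^+ i * ((n - k)`!)%:R / (i`!)%:R :> rat.
Proof.
case: n hn hk => [//|n] _ _.
rewrite num_latin_profiles_fiber -card_latin_prefs (card_latin_prefs_fiber ord0).
have : (n.+1`!)%:R != 0 :> rat by rewrite pnatr_eq0 -lt0n fact_gt0.
move: (n.+1`!) => N N_neq0.
rewrite !natrM card_perm_fixed_points card_ord.
by field.
Qed.
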